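(* Let $F$ be the cumulative distribution function of the Cantor distribution and let $m$ be its mean residual life function. Then: (i) $m$ is continuous on $[0,1]$, and for every $x\in[0,1)$, $$m(x)=\frac{1}{F(1-x)}\int_0^{1-x}F(u)\,du .$$ (ii) For every $x\in(0,1)$, each of the functions $m$ and $e$ is locally decreasing at $x$ if and only if $x\in[0,1]\setminus\mathcal C$. (iii) The equation $m(x)=x$ has exactly one solution in $[0,1]$, namely $x^*=\tfrac{5}{12}$.
   Context: The Cantor set is $\mathcal C=\bigcap_{n\ge1}C_n$, where $C_0=[0,1]$ and $C_n=\tfrac13C_{n-1}\cup\left(\tfrac23+\tfrac13C_{n-1}\right)$ for $n\ge1$. The Cantor distribution is the probability distribution on $[0,1]$ that is uniform on $\mathcal C$; its CDF $F$ (the Cantor function) is continuous and nondecreasing, with $F(0)=0$ and $F(1)=1$. For a random variable $X$ on $[0,1]$ with continuous CDF $F$, the mean residual life (MRL) function is $$m(x)=\mathbb E[X-x\mid X>x]=\frac{1}{1-F(x)}\int_x^1(1-F(u))\,du \quad (x<1),\qquad m(x)=0\quad(x\ge1).$$ The generalized mean residual life function is $e(x)=m(x)/x$ for $0<x<1$. A function $f:(0,1)\to\mathbb R$ is called locally decreasing at $x\in(0,1)$ if there is an open neighborhood $U$ of $x$ such that $f|_U$ is non-increasing. *)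

From Stdlib Require Import Reals Lra Rtopology ClassicalEpsilon.
Open Scope R_scope.

(* C_0 = [0,1];  C_{n+1} = (1/3) C_n  U  (2/3 + (1/3) C_n). *)
Fixpoint cantor_level (n : nat) (x : R) : Prop :=
  match n with
  | O => 0 <= x <= 1
  | S k => cantor_level k (3 * x) \/ cantor_level k (3 * x - 2)
  end.

Definition cantor_set (x : R) : Prop := forall n : nat, cantor_level n x.

(* Characterization of the Cantor function (CDF of the Cantor distribution,
   on all of R): the unique nondecreasing solution of the self-similarity
   equations, with F = 0 on (-oo,0] and F = 1 on [1,+oo). *)
Definition is_cantor_cdf (F : R -> R) : Prop :=
  (forall x y, x <= y -> F x <= F y) /\
  (forall x, x <= 0 -> F x = 0) /\
  (forall x, 1 <= x -> F x = 1) /\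
  (forall x, 0 <= x <= 1/3 -> F x = F (3 * x) / 2) /\
  (forall x, 1/3 <= x <= 2/3 -> F x = 1/2) /\
  (forall x, 2/3 <= x <= 1 -> F x = 1/2 + F (3 * x - 2) / 2).

(* Total Riemann integral: the value of RiemannInt when f is Riemann
   integrable on [a,b] (RiemannInt does not depend on the proof). *)
Definition RInt (f : R -> R) (a b : R) : R :=
  epsilon (inhabits 0)
    (fun I => exists pr : Riemann_integrable f a b, RiemannInt pr = I).

Definition mrl (F : R -> R) (x : R) : R :=
  if Rlt_dec x 1 then / (1 - F x) * RInt (fun u => 1 - F u) x 1 else 0.

Definition gmrl (F : R -> R) (x : R) : R := mrl F x / x.

Definition locally_decreasing (f : R -> R) (x : R) : Prop :=
  exists U : R -> Prop, open_set U /\ U x /\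
    forall y z, U y -> U z -> 0 < y < 1 -> 0 < z < 1 -> y <= z -> f z <= f y.

(* Write [Fbar = 1 - F] for the survival function, so that [mrl F x * Fbar x] is the tail
   integral of [Fbar] from [x] to [1].  The reflection [x |-> 1 - F (1 - x)] satisfies the
   self-similar characterisation of [F], which determines [F] uniquely, so
   [F (1 - x) = 1 - F x]; the substitution [u |-> 1 - u] then gives the formula of (i), and
   continuity follows from that of [F] (a [3^-n]-step moves [F] by at most [2^-n]).
   On a gap of the Cantor set [F] is constant, and there [mrl F] decreases because the tail
   integral does.  A point [x] of the Cantor set lies in triadic intervals [[a, a + 3^-n]]
   across which [F] rises by [2^-n]; if [mrl F x / x] were locally nonincreasing, then,
   [mrl F] being bounded below near [x], that rise would be [O(3^-n)], which is absurd.
   Finally [F = 1/2] on the middle third, where [mrl F x = 5/6 - x], and elementary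
   bounds exclude fixed points elsewhere. *)

From Pilot Require Import Defs.
From Stdlib Require Import Reals Rtopology Lra ClassicalEpsilon Classical.
From Coquelicot Require Import Coquelicot.
Open Scope R_scope.

Lemma pow_inv_bounds k n : 1 <= k -> 0 < (/ k) ^ n <= 1.
Proof.
  intros Hk. split.
  - apply pow_lt, Rinv_0_lt_compat; lra.
  - rewrite <- (pow1 n). apply pow_incr. split.
    + left; apply Rinv_0_lt_compat; lra.
    + rewrite <- Rinv_1. apply Rinv_le_contravar; lra.
Qed.

Lemma pow_eventually_lt r eps : 0 <= r < 1 -> 0 < eps -> eventually (fun n => r ^ n < eps).
Proof.
  intros Hr Heps.
  destruct (pow_lt_1_zero r ltac:(rewrite Rabs_pos_eq; lra) eps Heps) as [N HN].
  exists N. intros n Hn. specialize (HN n Hn).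
  rewrite Rabs_pos_eq in HN; [exact HN | apply pow_le; lra].
Qed.

Lemma total_RInt_eq f a b : ex_RInt f a b -> Defs.RInt f a b = RInt f a b.
Proof.
  intros Hex. unfold Defs.RInt.
  destruct (epsilon_spec (inhabits 0)
    (fun I => exists pr : Riemann_integrable f a b, RiemannInt pr = I)) as [pr <-].
  - exists (RiemannInt (ex_RInt_Reals_0 f a b Hex)). eauto.
  - symmetry. apply RInt_Reals.
Qed.

Lemma RInt_between f a b lo hi : a <= b -> ex_RInt f a b ->
  (forall x, a < x < b -> lo <= f x <= hi) -> lo * (b - a) <= RInt f a b <= hi * (b - a).
Proof.
  intros Hab Hex Hf.
  assert (Hconst : forall c, RInt (fun _ => c) a b = c * (b - a)).
  { intros c. rewrite RInt_const. unfold scal; simpl; unfold mult; simpl. ring. }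
  rewrite <- !Hconst. split; apply RInt_le; auto using ex_RInt_const; apply Hf.
Qed.

Lemma continuity_pt_limit1_in f D x : continuity_pt f x -> limit1_in f D (f x) x.
Proof.
  intros Hf eps Heps. destruct (Hf eps Heps) as [alp [Halp H]].
  exists alp. split; [exact Halp|]. intros y [_ Hy].
  destruct (Req_dec y x) as [->|Hyx].
  - simpl. unfold R_dist. rewrite Rminus_diag, Rabs_R0. exact Heps.
  - apply H. split; [split; [exact I | auto] | exact Hy].
Qed.

Section CantorFunction.
Variable F : R -> R.
Hypothesis HF : is_cantor_cdf F.

Lemma F_mono x y : x <= y -> F x <= F y. Proof. apply HF. Qed.
Lemma F_nonpos x : x <= 0 -> F x = 0. Proof. apply HF. Qed.
Lemma F_ge_1 x : 1 <= x -> F x = 1. Proof. apply HF. Qed.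
Lemma F_left_third x : 0 <= x <= 1/3 -> F x = F (3 * x) / 2. Proof. apply HF. Qed.
Lemma F_middle_third x : 1/3 <= x <= 2/3 -> F x = 1/2. Proof. apply HF. Qed.
Lemma F_right_third x : 2/3 <= x <= 1 -> F x = 1/2 + F (3 * x - 2) / 2. Proof. apply HF. Qed.

Lemma F_bounds x : 0 <= F x <= 1.
Proof.
  rewrite <- (F_nonpos (Rmin x 0)), <- (F_ge_1 (Rmax x 1)) by
    (apply Rmin_r || apply Rmax_r).
  split; apply F_mono; [apply Rmin_l | apply Rmax_l].
Qed.

Lemma F_increment_le n x y : x <= y <= x + (/3) ^ n -> F y - F x <= (/2) ^ n.
Proof.
  revert x y. induction n as [|n IH]; intros x y Hxy; simpl in *.
  - pose proof (F_bounds x); pose proof (F_bounds y); lra.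
  - pose proof (pow_inv_bounds 3 n ltac:(lra)). pose proof (pow_inv_bounds 2 n ltac:(lra)).
    set (e := (/3) ^ n) in *. set (h := (/2) ^ n) in *.
    destruct (Rle_dec x 0) as [Hx0|Hx0].
    { rewrite (F_nonpos x) by lra. destruct (Rle_dec y 0).
      - rewrite (F_nonpos y) by lra. lra.
      - rewrite (F_left_third y) by lra. pose proof (IH 0 (3 * y)) as I.
        rewrite (F_nonpos 0) in I by lra. lra. }
    destruct (Rle_dec 1 y) as [Hy1|Hy1].
    { rewrite (F_ge_1 y) by lra. destruct (Rle_dec 1 x).
      - rewrite (F_ge_1 x) by lra. lra.
      - rewrite (F_right_third x) by lra. pose proof (IH (3 * x - 2) 1) as I.
        rewrite (F_ge_1 1) in I by lra. lra. }
    destruct (Rle_dec y (1/3)).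
    { rewrite (F_left_third x), (F_left_third y) by lra. pose proof (IH (3 * x) (3 * y)). lra. }
    destruct (Rle_dec (2/3) x).
    { rewrite (F_right_third x), (F_right_third y) by lra.
      pose proof (IH (3 * x - 2) (3 * y - 2)). lra. }
    destruct (Rle_dec (1/3) x), (Rle_dec y (2/3)).
    + rewrite (F_middle_third x), (F_middle_third y) by lra. lra.
    + rewrite (F_middle_third x), (F_right_third y) by lra. pose proof (IH 0 (3 * y - 2)) as I.
      rewrite (F_nonpos 0) in I by lra. lra.
    + rewrite (F_left_third x), (F_middle_third y) by lra. pose proof (IH (3 * x) 1) as I.
      rewrite (F_ge_1 1) in I by lra. lra.
    + lra.
Qed.

Lemma F_continuous x : continuous F x.
Proof.
  apply continuity_pt_filterlim. intros eps Heps.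
  destruct (pow_eventually_lt (/2) eps ltac:(lra) Heps) as [N HN].
  specialize (HN N (le_n N)).
  exists ((/3) ^ N). split; [apply pow_inv_bounds; lra|].
  intros y [_ Hy]. simpl in *. unfold R_dist in *.
  destruct (Rle_dec x y).
  - pose proof (F_mono x y ltac:(lra)). pose proof (F_increment_le N x y).
    rewrite Rabs_pos_eq in Hy |- *; lra.
  - pose proof (F_mono y x ltac:(lra)). pose proof (F_increment_le N y x).
    rewrite Rabs_left1 in Hy |- *; lra.
Qed.

Lemma F_one_minus_pow n : F (1 - (/3) ^ n) = 1 - (/2) ^ n.
Proof.
  induction n as [|n IH]; simpl.
  - rewrite F_nonpos; lra.
  - pose proof (pow_inv_bounds 3 n ltac:(lra)).
    rewrite F_right_third by lra.
    replace (3 * (1 - / 3 * (/ 3) ^ n) - 2) with (1 - (/ 3) ^ n) by field.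
    rewrite IH. field.
Qed.

Lemma F_lt_1 x : x < 1 -> F x < 1.
Proof.
  intros Hx. destruct (pow_eventually_lt (/3) (1 - x) ltac:(lra) ltac:(lra)) as [N HN].
  specialize (HN N (le_n N)).
  pose proof (F_mono x (1 - (/3) ^ N) ltac:(lra)). rewrite F_one_minus_pow in H.
  pose proof (pow_inv_bounds 2 N ltac:(lra)). lra.
Qed.

Lemma F_triadic_increment n x : cantor_level n x ->
  exists a, 0 <= a /\ a + (/3) ^ n <= 1 /\ a <= x <= a + (/3) ^ n /\
    F (a + (/3) ^ n) - F a = (/2) ^ n.
Proof.
  revert x. induction n as [|n IH]; intros x Hx; simpl in *.
  - exists 0. rewrite Rplus_0_l, F_ge_1, F_nonpos; lra.
  - pose proof (pow_inv_bounds 3 n ltac:(lra)).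
    set (e := (/3) ^ n) in *.
    destruct Hx as [Hx|Hx]; destruct (IH _ Hx) as [a (Ha0 & Ha1 & Hax & Hinc)].
    + exists (a / 3). rewrite (F_left_third (a / 3)), (F_left_third (a / 3 + / 3 * e)) by lra.
      replace (3 * (a / 3)) with a by field. replace (3 * (a / 3 + / 3 * e)) with (a + e) by field.
      lra.
    + exists ((a + 2) / 3).
      rewrite (F_right_third ((a + 2) / 3)), (F_right_third ((a + 2) / 3 + / 3 * e)) by lra.
      replace (3 * ((a + 2) / 3) - 2) with a by field.
      replace (3 * ((a + 2) / 3 + / 3 * e) - 2) with (a + e) by field.
      lra.
Qed.

Lemma F_flat_off_level n x : 0 <= x <= 1 -> ~ cantor_level n x ->
  exists p q, 0 <= p < x /\ x < q <= 1 /\ forall y, p <= y <= q -> F y = F x.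
Proof.
  revert x. induction n as [|n IH]; intros x Hx Hn; simpl in *; [tauto|].
  destruct (Rle_dec x (1/3)).
  - destruct (IH (3 * x)) as [p [q (Hp & Hq & Hflat)]]; [lra | tauto |].
    exists (p / 3), (q / 3). split; [lra | split; [lra|]].
    intros y Hy. rewrite (F_left_third y), (F_left_third x), (Hflat (3 * y)) by lra. reflexivity.
  - destruct (Rle_dec (2/3) x).
    + destruct (IH (3 * x - 2)) as [p [q (Hp & Hq & Hflat)]]; [lra | tauto |].
      exists ((p + 2) / 3), ((q + 2) / 3). split; [lra | split; [lra|]].
      intros y Hy. rewrite (F_right_third y), (F_right_third x), (Hflat (3 * y - 2)) by lra.
      reflexivity.
    + exists (1/3), (2/3). split; [lra | split; [lra|]].
      intros y Hy. rewrite (F_middle_third y), (F_middle_third x) by lra. reflexivity.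
Qed.

End CantorFunction.

Lemma cantor_cdf_dist_le F G : is_cantor_cdf F -> is_cantor_cdf G ->
  forall n x, Rabs (G x - F x) <= (/2) ^ n.
Proof.
  intros HF HG n. induction n as [|n IH]; intros x; simpl.
  - pose proof (F_bounds F HF x). pose proof (F_bounds G HG x). apply Rabs_le. lra.
  - pose proof (pow_inv_bounds 2 n ltac:(lra)).
    destruct (Rle_dec x 0).
    { rewrite (F_nonpos F HF x), (F_nonpos G HG x), Rminus_diag, Rabs_R0 by lra. lra. }
    destruct (Rle_dec 1 x).
    { rewrite (F_ge_1 F HF x), (F_ge_1 G HG x), Rminus_diag, Rabs_R0 by lra. lra. }
    destruct (Rle_dec x (1/3)).
    { rewrite (F_left_third F HF x), (F_left_third G HG x) by lra.
      replace (G (3 * x) / 2 - F (3 * x) / 2) with (/2 * (G (3 * x) - F (3 * x))) by field.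
      rewrite Rabs_mult, Rabs_pos_eq by lra. specialize (IH (3 * x)). lra. }
    destruct (Rle_dec (2/3) x).
    { rewrite (F_right_third F HF x), (F_right_third G HG x) by lra.
      replace (1/2 + G (3 * x - 2) / 2 - (1/2 + F (3 * x - 2) / 2))
        with (/2 * (G (3 * x - 2) - F (3 * x - 2))) by field.
      rewrite Rabs_mult, Rabs_pos_eq by lra. specialize (IH (3 * x - 2)). lra. }
    rewrite (F_middle_third F HF x), (F_middle_third G HG x), Rminus_diag, Rabs_R0 by lra. lra.
Qed.

Lemma cantor_cdf_unique F G : is_cantor_cdf F -> is_cantor_cdf G -> forall x, G x = F x.
Proof.
  intros HF HG x. destruct (Req_dec (G x) (F x)) as [|Hne]; [assumption|].
  assert (Hpos : 0 < Rabs (G x - F x)) by (apply Rabs_pos_lt; lra).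
  destruct (pow_eventually_lt (/2) _ ltac:(lra) Hpos) as [N HN].
  specialize (HN N (le_n N)). pose proof (cantor_cdf_dist_le F G HF HG N x). lra.
Qed.

Lemma F_reflect F : is_cantor_cdf F -> forall x, F (1 - x) = 1 - F x.
Proof.
  intros HF x.
  assert (HG : is_cantor_cdf (fun x => 1 - F (1 - x))).
  { repeat split.
    - intros u v Huv. pose proof (F_mono F HF (1 - v) (1 - u)). lra.
    - intros u Hu. rewrite (F_ge_1 F HF); lra.
    - intros u Hu. rewrite (F_nonpos F HF); lra.
    - intros u Hu. rewrite (F_right_third F HF) by lra.
      replace (3 * (1 - u) - 2) with (1 - 3 * u) by ring. lra.
    - intros u Hu. rewrite (F_middle_third F HF); lra.
    - intros u Hu. rewrite (F_left_third F HF) by lra.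
      replace (3 * (1 - u)) with (1 - (3 * u - 2)) by ring. lra. }
  pose proof (cantor_cdf_unique F _ HF HG x). lra.
Qed.

Section MeanResidualLife.
Variable F : R -> R.
Hypothesis HF : is_cantor_cdf F.

Definition Fbar u := 1 - F u.

Lemma Fbar_pos x : x < 1 -> 0 < Fbar x.
Proof. intros Hx. pose proof (F_lt_1 F HF x Hx). unfold Fbar. lra. Qed.

Lemma Fbar_continuous x : continuous Fbar x.
Proof.
  apply (continuous_minus (fun _ => 1)); [apply continuous_const | apply (F_continuous F HF)].
Qed.

Lemma ex_RInt_F a b : ex_RInt F a b.
Proof.
  apply (@ex_RInt_continuous R_CompleteNormedModule). intros z _. apply (F_continuous F HF).
Qed.

Lemma ex_RInt_Fbar a b : ex_RInt Fbar a b.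
Proof. apply (@ex_RInt_continuous R_CompleteNormedModule). intros z _. apply Fbar_continuous. Qed.

Lemma RInt_Fbar_Chasles a b c : RInt Fbar a b + RInt Fbar b c = RInt Fbar a c.
Proof. apply (RInt_Chasles Fbar); apply ex_RInt_Fbar. Qed.

Lemma RInt_Fbar_bounds a b : a <= b ->
  Fbar b * (b - a) <= RInt Fbar a b <= Fbar a * (b - a).
Proof.
  intros Hab. apply RInt_between; [exact Hab | apply ex_RInt_Fbar |].
  intros x Hx. unfold Fbar. pose proof (F_mono F HF a x); pose proof (F_mono F HF x b). lra.
Qed.

Lemma RInt_Fbar_nonneg_le a b : a <= b -> 0 <= RInt Fbar a b <= b - a.
Proof.
  intros Hab. pose proof (RInt_Fbar_bounds a b Hab).
  pose proof (F_bounds F HF a); pose proof (F_bounds F HF b). unfold Fbar in *. nra.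
Qed.

Lemma RInt_Fbar_reflect a b : RInt Fbar a b = RInt F (1 - b) (1 - a).
Proof.
  rewrite <- (opp_RInt_swap F) by apply ex_RInt_F.
  replace (1 - a) with (-1 * a + 1) by ring. replace (1 - b) with (-1 * b + 1) by ring.
  rewrite <- (RInt_comp_lin F) by apply ex_RInt_F.
  rewrite <- (RInt_opp (fun y => scal (-1) (F (-1 * y + 1)))).
  2:{ apply (ex_RInt_comp_lin F (-1) 1 a b), ex_RInt_F. }
  apply RInt_ext. intros x _. unfold Fbar, scal, opp; simpl; unfold mult; simpl.
  replace (-1 * x + 1) with (1 - x) by ring. rewrite (F_reflect F HF). ring.
Qed.

Lemma RInt_Fbar_0_1 : RInt Fbar 0 1 = 1/2.
Proof.
  assert (Hsum : RInt Fbar 0 1 + RInt F 0 1 = 1).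
  { rewrite <- (RInt_plus Fbar F) by (apply ex_RInt_Fbar || apply ex_RInt_F).
    rewrite (RInt_ext _ (fun _ => 1)) by (intros; unfold Fbar, plus; simpl; ring).
    rewrite RInt_const. unfold scal; simpl; unfold mult; simpl. ring. }
  rewrite RInt_Fbar_reflect in Hsum |- *. rewrite !Rminus_0_r, Rminus_diag in *. lra.
Qed.

Lemma RInt_Fbar_middle a b : 1/3 <= a <= b -> b <= 2/3 -> RInt Fbar a b = (b - a) / 2.
Proof.
  intros Ha Hb. pose proof (RInt_Fbar_bounds a b ltac:(lra)).
  unfold Fbar in *. rewrite (F_middle_third F HF a), (F_middle_third F HF b) in * by lra. lra.
Qed.

(* On the right third [Fbar x = Fbar (3 x - 2) / 2], so the substitution [u = 3 x - 2]
   scales the integral by [1/6]. *)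
Lemma RInt_Fbar_right_third : RInt Fbar (2/3) 1 = 1/12.
Proof.
  pose proof (RInt_comp_lin Fbar 3 (-2) (2/3) 1 (ex_RInt_Fbar _ _)) as Hsub.
  replace (3 * (2/3) + -2) with 0 in Hsub by field.
  replace (3 * 1 + -2) with 1 in Hsub by ring.
  rewrite RInt_Fbar_0_1 in Hsub.
  rewrite (RInt_ext _ (fun y => 6 * Fbar y)) in Hsub.
  2:{ intros x Hx. rewrite Rmin_left, Rmax_right in Hx by lra.
      unfold scal, Fbar; simpl; unfold mult; simpl.
      rewrite (F_right_third F HF x) by lra. replace (3 * x + -2) with (3 * x - 2) by ring. field. }
  rewrite (RInt_scal Fbar) in Hsub by apply ex_RInt_Fbar.
  unfold scal in Hsub; simpl in Hsub; unfold mult in Hsub; simpl in Hsub. lra.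
Qed.

Lemma RInt_Fbar_upper_two_thirds : RInt Fbar (1/3) 1 = 1/4.
Proof.
  rewrite <- (RInt_Fbar_Chasles (1/3) (2/3) 1), RInt_Fbar_right_third, RInt_Fbar_middle; lra.
Qed.

Lemma mrl_ratio x : x < 1 -> mrl F x = RInt Fbar x 1 / Fbar x.
Proof.
  intros Hx. unfold mrl. destruct (Rlt_dec x 1) as [_|]; [|lra].
  rewrite (total_RInt_eq Fbar) by apply ex_RInt_Fbar. unfold Rdiv, Fbar. ring.
Qed.

Lemma mrl_mul_Fbar x : x < 1 -> mrl F x * Fbar x = RInt Fbar x 1.
Proof.
  intros Hx. rewrite mrl_ratio by exact Hx. pose proof (Fbar_pos x Hx). field. lra.
Qed.

Lemma mrl_ge_1 x : 1 <= x -> mrl F x = 0.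
Proof. intros Hx. unfold mrl. destruct (Rlt_dec x 1); [lra | reflexivity]. Qed.

Lemma mrl_bounds x : x < 1 -> 0 <= mrl F x <= 1 - x.
Proof.
  intros Hx. pose proof (mrl_mul_Fbar x Hx). pose proof (Fbar_pos x Hx).
  pose proof (RInt_Fbar_bounds x 1 ltac:(lra)). pose proof (F_bounds F HF 1).
  unfold Fbar in *. split; nra.
Qed.

Lemma mrl_nonneg x : 0 <= mrl F x.
Proof.
  destruct (Rlt_dec x 1).
  - apply mrl_bounds; assumption.
  - rewrite mrl_ge_1; lra.
Qed.

Lemma RInt_Fbar_tail_continuous x : continuous (fun y => RInt Fbar y 1) x.
Proof.
  apply (@ex_derive_continuous R_AbsRing R_NormedModule). exists (opp (Fbar x)).
  apply (is_derive_RInt' (V := R_CompleteNormedModule) Fbar _ x 1); [|apply Fbar_continuous].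
  apply filter_forall. intros y. apply RInt_correct, ex_RInt_Fbar.
Qed.

(* At [1], continuity comes from the squeeze [0 <= mrl F y <= 1 - y]. *)
Lemma mrl_continuous x : x <= 1 -> continuity_pt (mrl F) x.
Proof.
  intros Hx. destruct (Req_dec x 1) as [->|Hx1].
  - intros eps Heps. exists eps. split; [exact Heps|].
    intros y [_ Hy]. simpl in *. unfold R_dist in *.
    rewrite (mrl_ge_1 1), Rminus_0_r by lra.
    destruct (Rlt_dec y 1).
    + pose proof (mrl_bounds y r). rewrite Rabs_left1 in Hy by lra.
      rewrite Rabs_pos_eq; lra.
    + rewrite mrl_ge_1, Rabs_R0; lra.
  - apply continuity_pt_filterlim. change (continuous (mrl F) x).
    apply continuous_ext_loc with (fun y => RInt Fbar y 1 * / Fbar y).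
    + apply (filter_imp (fun y => y < 1)); [|apply open_lt; lra].
      intros y Hy. rewrite mrl_ratio by exact Hy. reflexivity.
    + apply (continuous_mult (fun y => RInt Fbar y 1)); [apply RInt_Fbar_tail_continuous|].
      apply continuous_Rinv_comp; [apply Fbar_continuous|].
      pose proof (Fbar_pos x ltac:(lra)). lra.
Qed.

Lemma mrl_reflect x : x < 1 -> mrl F x = / F (1 - x) * Defs.RInt F 0 (1 - x).
Proof.
  intros Hx. rewrite (total_RInt_eq F) by apply ex_RInt_F.
  rewrite (F_reflect F HF), mrl_ratio, RInt_Fbar_reflect, Rminus_diag by exact Hx.
  unfold Fbar, Rdiv. ring.
Qed.

Lemma mrl_nonincreasing_on_flat p q : (forall y, p <= y <= q -> F y = F p) ->
  forall y z, p <= y <= z -> z <= q -> z < 1 -> mrl F z <= mrl F y.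
Proof.
  intros Hflat y z Hyz Hzq Hz.
  assert (HFbar : Fbar y = Fbar z).
  { unfold Fbar. rewrite (Hflat y), (Hflat z) by lra. reflexivity. }
  pose proof (mrl_mul_Fbar y ltac:(lra)). pose proof (mrl_mul_Fbar z Hz).
  pose proof (RInt_Fbar_Chasles y z 1). pose proof (RInt_Fbar_nonneg_le y z ltac:(lra)).
  apply Rmult_le_reg_r with (Fbar z); [exact (Fbar_pos z Hz)|]. rewrite <- HFbar at 2. lra.
Qed.

Lemma locally_decreasing_mrl_gmrl x :
  locally_decreasing (mrl F) x -> locally_decreasing (gmrl F) x.
Proof.
  intros [U (HU & Ux & Hdec)]. exists U. split; [exact HU | split; [exact Ux|]].
  intros y z Uy Uz Hy Hz Hyz. unfold gmrl, Rdiv.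
  pose proof (Hdec y z Uy Uz Hy Hz Hyz). pose proof (mrl_nonneg z).
  apply Rle_trans with (mrl F z * / y).
  - apply Rmult_le_compat_l; [lra|]. apply Rinv_le_contravar; lra.
  - apply Rmult_le_compat_r; [left; apply Rinv_0_lt_compat|]; lra.
Qed.

Lemma mrl_locally_decreasing_off_cantor x : 0 < x < 1 -> ~ cantor_set x ->
  locally_decreasing (mrl F) x.
Proof.
  intros Hx HC. destruct (not_all_ex_not _ _ HC) as [n Hn].
  destruct (F_flat_off_level F HF n x ltac:(lra) Hn) as [p [q (Hp & Hq & Hflat)]].
  assert (Hr : 0 < (q - p) / 2) by lra.
  exists (disc ((p + q) / 2) (mkposreal _ Hr)). split; [apply disc_P1|].
  unfold disc; simpl. split; [apply Rabs_def1; lra|].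
  intros y z Hy Hz _ Hz1 Hyz. apply Rabs_def2 in Hy, Hz.
  apply (mrl_nonincreasing_on_flat p q); [|lra ..].
  intros u Hu. rewrite (Hflat u), (Hflat p) by lra. reflexivity.
Qed.

Lemma mrl_bounded_below t : t < 1 -> exists c, 0 < c /\ forall a, a <= t -> c <= mrl F a.
Proof.
  intros Ht. set (t' := (1 + t) / 2).
  assert (Ht' : t < t' < 1) by (unfold t'; lra). clearbody t'.
  pose proof (Fbar_pos t' ltac:(lra)).
  exists (Fbar t' * (t' - t)). split; [apply Rmult_lt_0_compat; lra|].
  intros a Ha.
  (* [mrl F a >= mrl F a * Fbar a = RInt Fbar a 1 >= RInt Fbar t t'] *)
  pose proof (RInt_Fbar_Chasles a t 1). pose proof (RInt_Fbar_Chasles t t' 1).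
  pose proof (RInt_Fbar_nonneg_le a t Ha). pose proof (RInt_Fbar_nonneg_le t' 1 ltac:(lra)).
  pose proof (RInt_Fbar_bounds t t' ltac:(lra)).
  pose proof (mrl_mul_Fbar a ltac:(lra)). pose proof (mrl_nonneg a).
  pose proof (F_bounds F HF a). unfold Fbar in *. nra.
Qed.

(* From [mrl F a * Fbar a = RInt Fbar a b + mrl F b * Fbar b] and [mrl F b <= mrl F a * b / a]. *)
Lemma mrl_increment_bound a b : 0 < a < b -> b < 1 -> gmrl F b <= gmrl F a ->
  mrl F a * (F b - F a) <= (b - a) * (1 + / a).
Proof.
  intros Hab Hb Hg.
  assert (Hmb : mrl F b <= mrl F a * (b / a)).
  { unfold gmrl in Hg. replace (mrl F b) with (mrl F b / b * b) by (field; lra).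
    replace (mrl F a * (b / a)) with (mrl F a / a * b) by (field; lra).
    apply Rmult_le_compat_r; lra. }
  pose proof (mrl_mul_Fbar a ltac:(lra)). pose proof (mrl_mul_Fbar b Hb).
  pose proof (RInt_Fbar_Chasles a b 1). pose proof (RInt_Fbar_nonneg_le a b ltac:(lra)).
  pose proof (mrl_bounds a ltac:(lra)). pose proof (F_bounds F HF b).
  set (s := (b - a) * / a).
  assert (Hs : 0 <= s) by (apply Rmult_le_pos; [lra | left; apply Rinv_0_lt_compat; lra]).
  assert (Hba : b / a = 1 + s) by (unfold s; field; lra).
  rewrite Hba in Hmb. unfold Fbar in *.
  assert (mrl F b * (1 - F b) <= mrl F a * (1 + s) * (1 - F b))
    by (apply Rmult_le_compat_r; lra).
  assert (mrl F a * (1 - F b) * s <= s)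
    by (rewrite <- (Rmult_1_l s) at 2; apply Rmult_le_compat_r; nra).
  replace ((b - a) * (1 + / a)) with ((b - a) + s) by (unfold s; ring).
  nra.
Qed.

Lemma gmrl_not_locally_decreasing_on_cantor x : 0 < x < 1 -> cantor_set x ->
  ~ locally_decreasing (gmrl F) x.
Proof.
  intros Hx HC [U (HU & Ux & Hdec)].
  destruct (HU x Ux) as [d Hd].
  destruct (mrl_bounded_below x ltac:(lra)) as [c [Hc Hlow]].
  set (K := 1 + 2 / x).
  assert (HK : 0 < K) by (unfold K; assert (0 < 2 / x) by (apply Rdiv_lt_0_compat; lra); lra).
  assert (Hsmall : eventually (fun n =>
    (2/3) ^ n < d /\ (2/3) ^ n < x / 2 /\ (2/3) ^ n < 1 - x /\ (2/3) ^ n < c / K)).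
  { repeat apply filter_and; apply pow_eventually_lt; try lra.
    - apply cond_pos.
    - apply Rdiv_lt_0_compat; lra. }
  destruct Hsmall as [N HN]. destruct (HN N (le_n N)) as (Hqd & Hqx & Hq1 & HqK).
  destruct (F_triadic_increment F HF N x (HC N)) as [a (_ & _ & Hax & Hinc)].
  pose proof (pow_inv_bounds 2 N ltac:(lra)) as Hh.
  pose proof (pow_inv_bounds 3 N ltac:(lra)) as He.
  assert (Heh : (/3) ^ N = (2/3) ^ N * (/2) ^ N).
  { rewrite <- Rpow_mult_distr. f_equal. field. }
  set (e := (/3) ^ N) in *. set (h := (/2) ^ N) in *. set (r := (2/3) ^ N) in *.
  assert (Hr : 0 <= r) by (unfold r; apply pow_le; lra).
  assert (Her : e <= r) by (rewrite Heh; nra).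
  assert (Hgmrl : gmrl F (a + e) <= gmrl F a).
  { apply Hdec; try (apply Hd; unfold disc; apply Rabs_def1); lra. }
  pose proof (mrl_increment_bound a (a + e) ltac:(lra) ltac:(lra) Hgmrl) as Hbound.
  replace (a + e - a) with e in Hbound by ring. rewrite Hinc in Hbound.
  assert (Hinv : / a <= 2 / x).
  { replace (2 / x) with (/ (x / 2)) by (field; lra). apply Rinv_le_contravar; lra. }
  assert (HcK : r * K < c).
  { apply Rmult_lt_compat_r with (r := K) in HqK; [|exact HK].
    unfold Rdiv in HqK. rewrite Rmult_assoc, Rinv_l in HqK by lra. lra. }
  pose proof (Hlow a ltac:(lra)).
  unfold K in *. nra.
Qed.

Lemma mrl_middle_third x : 1/3 <= x <= 2/3 -> mrl F x = 5/6 - x.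
Proof.
  intros Hx. pose proof (mrl_mul_Fbar x ltac:(lra)) as Hm.
  rewrite <- (RInt_Fbar_Chasles x (2/3) 1), RInt_Fbar_right_third, RInt_Fbar_middle in Hm by lra.
  unfold Fbar in Hm. rewrite (F_middle_third F HF x Hx) in Hm. lra.
Qed.

Lemma mrl_gt_left_third x : 0 <= x < 1/3 -> x < mrl F x.
Proof.
  intros Hx. pose proof (mrl_mul_Fbar x ltac:(lra)) as Hm.
  rewrite <- (RInt_Fbar_Chasles x (1/3) 1), RInt_Fbar_upper_two_thirds in Hm.
  pose proof (RInt_Fbar_bounds x (1/3) ltac:(lra)).
  pose proof (mrl_nonneg x). pose proof (F_bounds F HF x).
  unfold Fbar in *. rewrite (F_middle_third F HF (1/3)) in * by lra.
  (* [mrl F x * Fbar x >= 5/12 - x/2], and [Fbar x <= 3/4] once [x >= 2/9] *)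
  destruct (Rlt_dec x (1/4)).
  - nra.
  - assert (1/4 <= F x).
    { replace (1/4) with (F (2/9)); [apply (F_mono F HF); lra|].
      rewrite (F_left_third F HF), (F_middle_third F HF); lra. }
    nra.
Qed.

Lemma mrl_fixed_point_iff x : 0 <= x <= 1 -> (mrl F x = x <-> x = 5/12).
Proof.
  intros Hx. split.
  - intros Hfix.
    destruct (Rlt_dec x (1/3)); [pose proof (mrl_gt_left_third x); lra|].
    destruct (Rle_dec x (2/3)); [rewrite mrl_middle_third in Hfix; lra|].
    destruct (Rlt_dec x 1); [pose proof (mrl_bounds x r); lra|].
    rewrite mrl_ge_1 in Hfix; lra.
  - intros ->. rewrite mrl_middle_third; lra.
Qed.
End MeanResidualLife.

(* Coquelicot's [RInt] shadows the one of [Defs] used in the statement. *)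
Import Defs.

Theorem theorem1 (F : R -> R) (HF : is_cantor_cdf F) :
  (* (i) *)
  ((forall x, 0 <= x <= 1 -> limit1_in (mrl F) (fun y => 0 <= y <= 1) (mrl F x) x) /\
   (forall x, 0 <= x < 1 -> mrl F x = / F (1 - x) * RInt F 0 (1 - x))) /\
  (* (ii) *)
  (forall x, 0 < x < 1 ->
     (locally_decreasing (mrl F) x <-> ~ cantor_set x) /\
     (locally_decreasing (gmrl F) x <-> ~ cantor_set x)) /\
  (* (iii) *)
  (forall x, 0 <= x <= 1 -> (mrl F x = x <-> x = 5/12)).
Proof.
  split; [split|split].
  - intros x Hx. apply continuity_pt_limit1_in, (mrl_continuous F HF). lra.
  - intros x Hx. apply (mrl_reflect F HF). lra.
  - intros x Hx.
    pose proof (gmrl_not_locally_decreasing_on_cantor F HF x Hx) as Hcantor.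
    pose proof (mrl_locally_decreasing_off_cantor F HF x Hx) as Hgap.
    pose proof (locally_decreasing_mrl_gmrl F HF x) as Hmrl_gmrl.
    tauto.
  - exact (mrl_fixed_point_iff F HF).
Qed.
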